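(* Let $G=(V,E)$ be a graph with a partition $(V_1,V_2)$ of $V$ such that $G[V_1]$ and $G[V_2]$ are $P_5$-free, and let $k$ be an integer. Suppose that: $k\ge 1$; $G$ contains a $P_5$; every vertex of $G$ lies on some $P_5$ in $G$; every $P_5$ in $G$ contains at least $4$ vertices of $V_2$; and there is no vertex $v\in V_2$ that is isolated in $G[V_2]$ and for which there is a path $(v,w,x,y,z)$ in $G$ with $w\in V_1$. Let $v\in V_2$ be a vertex adjacent to at least two vertices of $V_1$, and let $C_v$ be the connected component of $G[V_2]$ containing $v$. Then every vertex $w\in V_1$ adjacent to $v$ satisfies $N(w)\subseteq V(C_v)$.
   Context: Graphs are finite, simple and undirected. A $P_5$ is a path on $5$ vertices (as a not necessarily induced subgraph), written as the sequence of its vertices; a graph is $P_5$-free if it contains no $P_5$. $G[X]$ denotes the subgraph induced by $X$; $N(w)$ is the set of neighbours of $w$ in $G$. *)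

From mathcomp Require Import all_boot.
Set Implicit Arguments. Unset Strict Implicit. Unset Printing Implicit Defensive.

Definition simple_graph (T : finType) (e : rel T) : Prop :=
  symmetric e /\ irreflexive e.

(* (a,b,c,d,f) is a P5 (not necessarily induced): 5 distinct vertices,
   consecutive ones adjacent. *)
Definition is_P5 (T : finType) (e : rel T) (a b c d f : T) : bool :=
  [&& uniq [:: a; b; c; d; f], e a b, e b c, e c d & e d f].

Definition has_P5 (T : finType) (e : rel T) : Prop :=
  exists a b c d f, is_P5 e a b c d f.

(* G[X] is P5-free: no P5 of G with all vertices in X
   (edges of G[X] are exactly the edges of G between vertices of X). *)
Definition P5_free_in (T : finType) (e : rel T) (X : {set T}) : Prop :=
  forall a b c d f, is_P5 e a b c d f ->
    ~~ all (fun x => x \in X) [:: a; b; c; d; f].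

Definition induced_rel (T : finType) (e : rel T) (X : {set T}) : rel T :=
  fun x y => [&& e x y, x \in X & y \in X].

Definition component (T : finType) (e : rel T) (X : {set T}) (v : T) : {set T} :=
  [set u | connect (induced_rel e X) v u].

Definition nbhd (T : finType) (e : rel T) (w : T) : {set T} := [set u | e w u].

(** Every P5 has at least four vertices in V2, so no P5 passes through two
    distinct vertices of V1.  As every vertex lies on a P5, G[V2] has no
    isolated vertex: an isolated vertex of G[V2] on a P5 either starts a P5
    whose second vertex is in V1, which is excluded, or has two path-neighbours
    in V1.  Now let w <> w' be neighbours of v in V1 and u a neighbour of w.  If
    u is in V2 but outside C_v, a V2-neighbour z of u gives the P5
    (w', v, w, u, z).  If u is in V1, take a P5 through w: if w is not its
    centre, u extends it to a P5 through u and w; if w is its centre, (v, w')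
    replaces one of its halves, giving a P5 through w and w'. *)
From mathcomp Require Import all_boot.

Lemma count_uniq_ge2 {T : eqType} {p : pred T} {s : seq T} {x y : T} :
  uniq s -> x != y -> x \in s -> y \in s -> p x -> p y -> 1 < count p s.
Proof.
move=> us xy xs ys px py; rewrite -size_filter.
apply: (@uniq_leq_size _ [:: x; y]); first by rewrite /= inE xy.
by move=> z; rewrite !inE => /orP[] /eqP->; rewrite mem_filter ?px ?py.
Qed.

Section P5Surgery.

Set Implicit Arguments.
Unset Strict Implicit.

Variables (T : finType) (e : rel T).
Hypothesis e_sym : symmetric e.

Definition P5_through (x y : T) : Prop :=
  exists a b c d f, [/\ is_P5 e a b c d f, x \in [:: a; b; c; d; f]
                      & y \in [:: a; b; c; d; f]].

Lemma is_P5_rev a b c d f : is_P5 e a b c d f -> is_P5 e f d c b a.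
Proof.
case/and5P=> uP eab ebc ecd edf; apply/and5P; split; rewrite 1?e_sym //.
by rewrite -[[:: f; d; c; b; a]]/(rev [:: a; b; c; d; f]) rev_uniq.
Qed.

Lemma is_P5_shift a b c d f x :
  is_P5 e a b c d f -> e f x -> x \notin [:: b; c; d; f] -> is_P5 e b c d f x.
Proof.
case/and5P=> uP _ ebc ecd edf efx xP; apply/and5P; split=> //.
by rewrite -[[:: b; c; d; f; x]]/(rcons [:: b; c; d; f] x) rcons_uniq xP; case/andP: uP.
Qed.

Lemma is_P5_replace_last a b c d f x :
  is_P5 e a b c d f -> e d x -> x \notin [:: a; b; c; d] -> is_P5 e a b c d x.
Proof.
case/and5P=> uP eab ebc ecd _ edx xP; apply/and5P; split=> //.
rewrite -[[:: a; b; c; d; x]]/(rcons [:: a; b; c; d] x) rcons_uniq xP.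
by move: uP; rewrite -[[:: a; b; c; d; f]]/(rcons [:: a; b; c; d] f) rcons_uniq => /andP[].
Qed.

Lemma is_P5_splice a b c d f x y :
  is_P5 e a b c d f -> e c x -> e x y ->
  x \notin [:: a; b; c] -> y \notin [:: a; b; c] -> x != y -> is_P5 e a b c x y.
Proof.
case/and5P=> uP eab ebc _ _ ecx exy xP yP xy; apply/and5P; split=> //.
have abc : uniq [:: a; b; c].
  by move: uP; rewrite -[[:: a; b; c; d; f]]/([:: a; b; c] ++ [:: d; f]) cat_uniq => /andP[].
rewrite -[[:: a; b; c; x; y]]/([:: a; b; c] ++ [:: x; y]) cat_uniq abc /=.
by rewrite (negbTE xP) (negbTE yP) inE xy.
Qed.

Lemma P5_through_end a b c d f w x :
  is_P5 e a b c d f -> w \in [:: a; b; d; f] -> e w x ->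
  x \notin [:: a; b; c; d; f] -> P5_through x w.
Proof.
move=> P wP ewx; rewrite !inE !negb_or => /and5P[xa xb xc xd xf].
move: wP; rewrite !inE => /or4P[] /eqP wE; subst w.
- exists d, c, b, a, x; split; rewrite ?inE ?eqxx ?orbT //.
  by apply: is_P5_shift (is_P5_rev P) ewx _; rewrite !inE !negb_or xa xb xc xd.
- exists f, d, c, b, x; split; rewrite ?inE ?eqxx ?orbT //.
  by apply: is_P5_replace_last (is_P5_rev P) ewx _; rewrite !inE !negb_or xb xc xd xf.
- exists a, b, c, d, x; split; rewrite ?inE ?eqxx ?orbT //.
  by apply: is_P5_replace_last P ewx _; rewrite !inE !negb_or xa xb xc xd.
- exists b, c, d, f, x; split; rewrite ?inE ?eqxx ?orbT //.
  by apply: is_P5_shift P ewx _; rewrite !inE !negb_or xb xc xd xf.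
Qed.

Lemma P5_through_center a b c d f x y :
  is_P5 e a b c d f -> e c x -> e x y -> x != c ->
  y \notin [:: a; b; c; d; f] -> x != y -> P5_through c y.
Proof.
move=> P ecx exy xc; rewrite !inE !negb_or => /and5P[ya yb yc yd yf] xy.
have [xab | xab] := boolP (x \in [:: a; b]).
- have /hasPn ab_cdf : ~~ has (mem [:: a; b]) [:: c; d; f].
    case/and5P: P; rewrite -[[:: a; b; c; d; f]]/([:: a; b] ++ [:: c; d; f]).
    by rewrite cat_uniq => /and3P[].
  have xfdc : x \notin [:: f; d; c].
    by apply: contraL xab; rewrite -[[:: f; d; c]]/(rev [:: c; d; f]) mem_rev; apply: ab_cdf.
  exists f, d, c, x, y; split; rewrite ?inE ?eqxx ?orbT //.
  by apply: is_P5_splice (is_P5_rev P) ecx exy xfdc _ xy; rewrite !inE !negb_or yf yd yc.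
- have xabc : x \notin [:: a; b; c].
    by move: xab; rewrite !inE !negb_or => /andP[-> ->].
  exists a, b, c, x, y; split; rewrite ?inE ?eqxx ?orbT //.
  by apply: is_P5_splice P ecx exy xabc _ xy; rewrite !inE !negb_or ya yb yc.
Qed.

End P5Surgery.

Section HeavyP5s.

Set Implicit Arguments.
Unset Strict Implicit.

Variables (T : finType) (e : rel T) (V1 V2 : {set T}).
Hypothesis V12_disjoint : [disjoint V1 & V2].
Hypothesis P5_V2_heavy : forall a b c d f, is_P5 e a b c d f ->
  4 <= count (fun x => x \in V2) [:: a; b; c; d; f].

Lemma P5_through_V1_eq x y : P5_through e x y -> x \in V1 -> y \in V1 -> x = y.
Proof.
case=> a [b [c [d [f [P xP yP]]]]] x1 y1; apply/eqP; apply: contraT => xy.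
have /and5P[uP _ _ _ _] := P.
have outside_V2 z : z \in V1 -> predC (fun z => z \in V2) z.
  by move=> z1; rewrite /= (disjointFr V12_disjoint z1).
have := count_uniq_ge2 uP xy xP yP (outside_V2 x x1) (outside_V2 y y1).
by move/(leq_add (P5_V2_heavy P)); rewrite count_predC.
Qed.

End HeavyP5s.

Section PartitionedGraph.

Set Implicit Arguments.
Unset Strict Implicit.

Variables (T : finType) (e : rel T) (V1 V2 : {set T}).
Hypotheses (e_sym : symmetric e) (e_irr : irreflexive e).
Hypothesis V12_disjoint : [disjoint V1 & V2].
Hypothesis V12_cover : V1 :|: V2 = [set: T].
Hypothesis P5_cover : forall x : T, exists a b c d f,
  is_P5 e a b c d f /\ x \in [:: a; b; c; d; f].
Hypothesis P5_V2_heavy : forall a b c d f, is_P5 e a b c d f ->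
  4 <= count (fun x => x \in V2) [:: a; b; c; d; f].
Hypothesis no_isolated_V2_P5_start :
  ~ (exists v, [/\ v \in V2, (forall u, u \in V2 -> ~~ e v u) &
       exists w x y z, w \in V1 /\ is_P5 e v w x y z]).

Lemma V1_V2_neq x y : x \in V1 -> y \in V2 -> x != y.
Proof. by move=> x1; apply: contraTneq => <-; rewrite (disjointFr V12_disjoint x1). Qed.

Lemma notin_V2_in_V1 x : x \notin V2 -> x \in V1.
Proof. by move=> x2; have := in_setT x; rewrite -V12_cover in_setU (negbTE x2) orbF. Qed.

Let V1_eq := P5_through_V1_eq V12_disjoint P5_V2_heavy.

Lemma V2_has_V2_nbr x : x \in V2 -> exists2 u, u \in V2 & e x u.
Proof.
move=> x2; apply/exists_inP; apply: contraT; rewrite negb_exists_in => /forall_inP no_nbr.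
have nbr_V1 y : e x y -> y \in V1.
  by move=> exy; apply: notin_V2_in_V1; apply: contraL exy; apply: no_nbr.
have [a [b [c [d [f [P xP]]]]]] := P5_cover x; have /and5P[uP eab ebc ecd edf] := P.
have two_nbrs_eq y z : e x y -> e x z ->
    y \in [:: a; b; c; d; f] -> z \in [:: a; b; c; d; f] -> y = z.
  by move=> exy exz yP zP; apply: V1_eq (nbr_V1 _ exy) (nbr_V1 _ exz); exists a, b, c, d, f.
move: xP uP; rewrite !inE => /orP[|/or4P[]] /eqP xE; subst x.
- case: no_isolated_V2_P5_start; exists a; split=> //.
  by exists b, c, d, f; split=> //; apply: nbr_V1.
- have -> : a = c by apply: two_nbrs_eq; rewrite ?inE ?eqxx ?orbT // e_sym.
  by rewrite /= !inE eqxx ?orbT ?andbF.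
- have -> : b = d by apply: two_nbrs_eq; rewrite ?inE ?eqxx ?orbT // e_sym.
  by rewrite /= !inE eqxx ?orbT ?andbF.
- have -> : c = f by apply: two_nbrs_eq; rewrite ?inE ?eqxx ?orbT // e_sym.
  by rewrite /= !inE eqxx ?orbT ?andbF.
- case: no_isolated_V2_P5_start; exists f; split=> //; exists d, c, b, a.
  by split; [apply: nbr_V1; rewrite e_sym | apply: is_P5_rev].
Qed.

Section TwoV1Nbrs.

Variables (v w w' : T).
Hypotheses (v2 : v \in V2) (w1 : w \in V1) (w'1 : w' \in V1) (w'w : w' != w).
Hypotheses (evw : e v w) (evw' : e v w').

Lemma V1_nbr_in_V2_component u : u \in V2 -> e w u -> connect (induced_rel e V2) v u.
Proof.
move=> u2 ewu; apply: contraT => not_vu.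
have [z z2 euz] := V2_has_V2_nbr u2.
have vu : v != u by apply: contraNneq not_vu => <-; apply: connect0.
have vz : v != z.
  by apply: contraNneq not_vu => ->; apply: connect1; rewrite /induced_rel e_sym euz z2 u2.
have uz : u != z by apply: contraTneq euz => ->; rewrite e_irr.
have vw : v != w by rewrite eq_sym V1_V2_neq.
have P : is_P5 e w' v w u z.
  apply/and5P; split=> //; rewrite 1?e_sym //.
  by rewrite /= !inE !negb_or w'w vw vu vz uz !V1_V2_neq.
have /V1_eq w'E : P5_through e w' w.
  by exists w', v, w, u, z; split; rewrite ?inE ?eqxx ?orbT.
by move: w'w; rewrite (w'E w'1 w1) eqxx.
Qed.

Lemma V1_nbr_notin_V1 u : e w u -> u \notin V1.
Proof.
move=> ewu; apply/negP => u1.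
have [a [b [c [d [f [P wP]]]]]] := P5_cover w.
have off_P y : y \in V1 -> y != w -> y \notin [:: a; b; c; d; f].
  by move=> y1; apply: contraNN => yP; apply/eqP/V1_eq => //; exists a, b, c, d, f.
have uw : u != w by apply: contraTneq ewu => ->; rewrite e_irr.
have [wc | wnc] := eqVneq w c.
- subst c; have ewv : e w v by rewrite e_sym.
  have [vw vw'] : v != w /\ v != w' by rewrite !(eq_sym v) !V1_V2_neq.
  have /V1_eq wE := P5_through_center e_sym P ewv evw' vw (off_P _ w'1 w'w) vw'.
  by move: w'w; rewrite (wE w1 w'1) eqxx.
- have wP' : w \in [:: a; b; d; f] by move: wP; rewrite !inE (negbTE wnc).
  have /V1_eq uE := P5_through_end e_sym P wP' ewu (off_P _ u1 uw).
  by move: uw; rewrite (uE u1 w1) eqxx.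
Qed.

Lemma nbhd_sub_component : nbhd e w \subset component e V2 v.
Proof.
apply/subsetP => u; rewrite /nbhd /component !inE => ewu.
have [u2 | /notin_V2_in_V1 u1] := boolP (u \in V2).
  exact: V1_nbr_in_V2_component.
by have := V1_nbr_notin_V1 ewu; rewrite u1.
Qed.

End TwoV1Nbrs.

End PartitionedGraph.

Theorem lemma5 (T : finType) (e : rel T) (V1 V2 : {set T}) (k : nat) :
  simple_graph e ->
  (* (V1, V2) is a partition of V *)
  [disjoint V1 & V2] -> V1 :|: V2 = [set: T] ->
  P5_free_in e V1 -> P5_free_in e V2 ->
  1 <= k ->
  has_P5 e ->
  (forall x : T, exists a b c d f,
      is_P5 e a b c d f /\ x \in [:: a; b; c; d; f]) ->
  (forall a b c d f, is_P5 e a b c d f ->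
      4 <= count (fun x => x \in V2) [:: a; b; c; d; f]) ->
  ~ (exists v, [/\ v \in V2, (forall u, u \in V2 -> ~~ e v u) &
       exists w x y z, w \in V1 /\ is_P5 e v w x y z]) ->
  forall v : T, v \in V2 -> 1 < #|[set w in V1 | e v w]| ->
  forall w : T, w \in V1 -> e v w ->
    nbhd e w \subset component e V2 v.
Proof.
move=> [e_sym e_irr] V12_disjoint V12_cover _ _ _ _ P5_cover P5_V2_heavy no_start.
move=> v v2 many_V1_nbrs w w1 evw.
have /set0Pn[w' ] : [set w' in V1 | e v w'] :\ w != set0.
  by move: many_V1_nbrs; rewrite (cardsD1 w) inE w1 evw add1n ltnS card_gt0.
rewrite !inE => /and3P[w'w w'1 evw'].
exact: (nbhd_sub_component e_sym e_irr V12_disjoint V12_cover P5_cover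
          P5_V2_heavy no_start v2 w1 w'1 w'w evw evw').
Qed.
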